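(* Let $\sigma : X^+ \to S$ be a choice of generators for a semigroup $S$. Let $S^0$ be $S$ with a new zero $0$ adjoined, let $Y = X \cup \{z\}$ for a new letter $z$, and let $\tau : Y^+ \to S^0$ be the unique extension of $\sigma$ to a choice of generators for $S^0$ (so $z\tau = 0$). Then $L_\sigma(S) = L_\tau(S^0) \cap \hat{X}^*$.
   Context: For a semigroup $S$, $S^1$ denotes the monoid obtained by adjoining a new identity $1$ (even if $S$ already has one). A choice of generators for $S$ is a surjective morphism $\sigma : X^+ \to S$ from a free semigroup; it extends uniquely to $\sigma^1 : X^* \to S^1$. Let $\overline{X} = \{\overline{x} : x \in X\}$ be a set of formal inverses, $\hat{X} = X \cup \overline{X}$. The loop automaton of $S$ with respect to $\sigma$ is the directed labelled graph with vertex set $S^1$, having for each $a \in S^1$ and $x \in X$ an edge from $a$ to $a(x\sigma)$ labelled $x$ and an edge from $a(x\sigma)$ to $a$ labelled $\overline{x}$. The loop problem $L_\sigma(S) \subseteq \hat{X}^*$ is the set of words labelling paths from $1$ to $1$ in this graph (including the empty word). *)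

From mathcomp Require Import all_boot.
Set Implicit Arguments. Unset Strict Implicit. Unset Printing Implicit Defensive.

(* A morphism X^+ -> T from the free semigroup is determined by the images
   of the letters, gen : X -> T; its value on the nonempty word x w is
   [word_eval mul gen x w]. *)
Definition word_eval (T X : Type) (mul : T -> T -> T) (gen : X -> T)
  (x : X) (w : seq X) : T :=
  foldl (fun acc y => mul acc (gen y)) (gen x) w.

Definition is_choice_of_generators (T X : Type) (mul : T -> T -> T)
  (gen : X -> T) : Prop :=
  forall s : T, exists (x : X) (w : seq X), word_eval mul gen x w = s.

(* T^1 : T with a NEW identity adjoined, represented as option T, None = 1. *)
Definition adj1_mul (T : Type) (mul : T -> T -> T) (a b : option T) : option T :=
  match a, b with
  | None, _ => b
  | _, None => a
  | Some x, Some y => Some (mul x y)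
  end.

(* T^0 : T with a NEW zero adjoined, represented as option T, None = 0. *)
Definition adj0_mul (T : Type) (mul : T -> T -> T) (a b : option T) : option T :=
  match a, b with
  | Some x, Some y => Some (mul x y)
  | _, _ => None
  end.

(* Letters of \hat X: (x, false) is x, (x, true) is the formal inverse \bar x. *)
(* lpath mul gen a w c : w labels a path from a to c in the loop automaton
   of T w.r.t. gen (vertex set T^1 = option T). Edges: a --x--> a(x gen),
   and a(x gen) --\bar x--> a. *)
Inductive lpath (T X : Type) (mul : T -> T -> T) (gen : X -> T) :
  option T -> seq (X * bool) -> option T -> Prop :=
| lp_nil a : lpath mul gen a [::] a
| lp_fwd a x w c :
    lpath mul gen (adj1_mul mul a (Some (gen x))) w c ->
    lpath mul gen a ((x, false) :: w) c
| lp_bwd a x w c :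
    lpath mul gen a w c ->
    lpath mul gen (adj1_mul mul a (Some (gen x))) ((x, true) :: w) c.

Definition loop_problem (T X : Type) (mul : T -> T -> T) (gen : X -> T)
  (w : seq (X * bool)) : Prop :=
  lpath mul gen None w None.

(* Y = X \cup {z} represented as option X, with z = None.
   tau : Y -> S^0 extends sigma and sends z to 0. *)
Definition tau_gen (S X : Type) (gen : X -> S) (y : option X) : option S :=
  match y with
  | Some x => Some (gen x)
  | None => None
  end.

Definition embed_hat (X : Type) (w : seq (X * bool)) : seq (option X * bool) :=
  map (fun p => (Some p.1, p.2)) w.

Definition in_hatX_star (X : Type) (v : seq (option X * bool)) : bool :=
  all (fun p : option X * bool => if p.1 is Some _ then true else false) v.

From mathcomp Require Import all_boot.
Set Implicit Arguments.
Unset Strict Implicit.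

(* The map [omap Some] (1 |-> 1, s |-> s) embeds S^1 into (S^0)^1 and commutes
   with right multiplication by generators, so it maps the loop automaton of S
   into that of S^0 on the letters of \hat X.  The only vertex missed is 0, and
   0 is isolated for these letters: a forward edge from 0 returns to 0, and a
   backward edge a --\bar x--> b with b = 0 forces a = b x = 0.  Hence paths
   between vertices of the image read over \hat X are exactly the images of
   paths of S. *)

Section LoopAutomatonInversion.

Variables (T X : Type) (mul : T -> T -> T) (gen : X -> T).

Lemma lpath_fwd_inv a x w c :
  lpath mul gen a ((x, false) :: w) c ->
  lpath mul gen (adj1_mul mul a (Some (gen x))) w c.
Proof. by move=> p; inversion p. Qed.

Lemma lpath_bwd_inv a x w c :
  lpath mul gen a ((x, true) :: w) c ->
  exists2 a', a = adj1_mul mul a' (Some (gen x)) & lpath mul gen a' w c.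
Proof. by move=> p; inversion p; exists a0. Qed.

End LoopAutomatonInversion.

Section AdjoinZero.

Variables (S X : Type) (mul : S -> S -> S) (sigma : X -> S).

Let lift : option S -> option (option S) := omap Some.

Lemma adj1_mul_lift a s :
  adj1_mul (adj0_mul mul) (lift a) (Some (Some s)) =
  lift (adj1_mul mul a (Some s)).
Proof. by case: a. Qed.

Lemma adj1_mul_liftV A s b :
  adj1_mul (adj0_mul mul) A (Some (Some s)) = lift b ->
  exists2 a, A = lift a & b = adj1_mul mul a (Some s).
Proof.
case: A => [[t|]|] /=; case: b => [u|] //= [<-]; first by exists (Some t).
by exists None.
Qed.

Lemma lpath_adj0 a w c :
  lpath (adj0_mul mul) (tau_gen sigma) (lift a) (embed_hat w) (lift c) <->
  lpath mul sigma a w c.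
Proof.
split.
- elim: w a => [|[x []] w IHw] a /= p.
  + by case: a c p => [?|] [?|] p; inversion p; exact: lp_nil.
  + have [A /esym/adj1_mul_liftV [a' -> ->] pA] := lpath_bwd_inv p.
    by apply: lp_bwd; apply: IHw.
  + by apply/lp_fwd/IHw; rewrite -adj1_mul_lift; exact: lpath_fwd_inv p.
- elim=> {a w c} [a|a x w c _ IH|a x w c _ IH] /=; first exact: lp_nil.
  + by apply: lp_fwd; rewrite /= adj1_mul_lift.
  + by rewrite -adj1_mul_lift; exact: (lp_bwd (Some x) IH).
Qed.

End AdjoinZero.

Lemma in_hatX_starP (X : Type) (v : seq (option X * bool)) :
  reflect (exists w, v = embed_hat w) (in_hatX_star v).
Proof.
apply: (iffP idP) => [|[w ->]]; last by elim: w.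
elim: v => [|[[x|] b] v IHv] //=; first by exists [::].
by case/IHv=> w ->; exists ((x, b) :: w).
Qed.

Theorem corollary3p3 (S X : Type) (mul : S -> S -> S)
  (mulA : forall a b c : S, mul a (mul b c) = mul (mul a b) c)
  (sigma : X -> S) (hsigma : is_choice_of_generators mul sigma) :
  forall v : seq (option X * bool),
    (exists w : seq (X * bool), v = embed_hat w /\ loop_problem mul sigma w)
    <->
    (loop_problem (adj0_mul mul) (tau_gen sigma) v /\
     in_hatX_star v).
Proof.
move=> v; split.
- case=> w [-> loop_w]; split; last by apply/in_hatX_starP; exists w.
  exact/(lpath_adj0 _ _ None w None).
- case=> loop_v /in_hatX_starP [w Ev]; exists w; split => //.
  by apply/(lpath_adj0 _ _ None w None); rewrite -Ev.
Qed.
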